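(* Let $\varepsilon$ be an end of a graph $G$ and $U$ a countable set of vertices of $G$. If there is an uncountable collection $\mathcal{C}$ of internally disjoint $\varepsilon$--$U$ combs in $G$, then $G$ contains a $|\mathcal{C}|$-star of rays, all of whose rays belong to $\varepsilon$, whose leaf rays are the spines of (a subset of) the combs in $\mathcal{C}$.
   Context: A ray is a one-way infinite path; two rays are equivalent if there are infinitely many disjoint paths between them; an end is an equivalence class of rays. An $\varepsilon$--$U$ comb is a subgraph $C=R\cup\bigcup\mathcal{P}$ of $G$ consisting of a ray $R$ (its spine) disjoint from $U$ and belonging to $\varepsilon$, and an infinite family $\mathcal{P}$ of disjoint $R$--$U$ paths; its interior is $C-U$; two such combs are internally disjoint if their interiors are disjoint. A $\kappa$-star of rays consists of pairwise disjoint rays $R$ (centre ray) and $R_i$, $i\in I$, $|I|=\kappa$ (leaf rays), together with a set $\mathcal{P}$ of independent paths (no inner vertex of one lies on another), each meeting the union of these rays exactly in its endvertices and joining $R$ to some $R_i$, such that for each $i$ there are infinitely many disjoint $R_i$--$R$ paths in $\mathcal{P}$. *)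

From Stdlib Require Import List.
Import ListNotations.

Section Graphs.
Context {V : Type} (adj : V -> V -> Prop).

Fixpoint chain (l : list V) : Prop :=
  match l with
  | x :: ((y :: _) as t) => adj x y /\ chain t
  | _ => True
  end.

Definition is_path (p : list V) : Prop := p <> [] /\ NoDup p /\ chain p.

(* Diestel's A--B path: meets A exactly in its first vertex and B exactly in its last *)
Definition AB_path (A B : V -> Prop) (p : list V) : Prop :=
  is_path p /\
  (exists x t, p = x :: t /\ A x /\ forall y, In y t -> ~ A y) /\
  (exists t x, p = t ++ [x] /\ B x /\ forall y, In y t -> ~ B y).

Definition disjoint_lists (p q : list V) : Prop := forall v, In v p -> ~ In v q.

Definition is_ray (r : nat -> V) : Prop :=
  (forall n m, r n = r m -> n = m) /\ forall n, adj (r n) (r (S n)).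

Definition in_ray (r : nat -> V) (v : V) : Prop := exists n, r n = v.

Definition equiv_rays (R1 R2 : nat -> V) : Prop :=
  exists f : nat -> list V,
    (forall n, AB_path (in_ray R1) (in_ray R2) (f n)) /\
    (forall n m, n <> m -> disjoint_lists (f n) (f m)).

Definition is_end (eps : (nat -> V) -> Prop) : Prop :=
  exists R0, is_ray R0 /\ forall R, eps R <-> (is_ray R /\ equiv_rays R0 R).

Definition countable_set (U : V -> Prop) : Prop :=
  exists f : V -> nat, forall x y, U x -> U y -> f x = f y -> x = y.

Record comb := mkComb { spine : nat -> V; teeth : nat -> list V }.

Definition is_comb (eps : (nat -> V) -> Prop) (U : V -> Prop) (c : comb) : Prop :=
  is_ray (spine c) /\ eps (spine c) /\
  (forall v, in_ray (spine c) v -> ~ U v) /\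
  (forall n, AB_path (in_ray (spine c)) U (teeth c n)) /\
  (forall n m, n <> m -> disjoint_lists (teeth c n) (teeth c m)).

Definition in_comb (c : comb) (v : V) : Prop :=
  in_ray (spine c) v \/ exists n, In v (teeth c n).

Definition comb_interior (U : V -> Prop) (c : comb) (v : V) : Prop :=
  in_comb c v /\ ~ U v.

Definition internally_disjoint (U : V -> Prop) (c1 c2 : comb) : Prop :=
  forall v, comb_interior U c1 v -> ~ comb_interior U c2 v.

Definition inner_vertex (p : list V) (v : V) : Prop :=
  exists x m y, p = x :: m ++ [y] /\ In v m.

Definition is_star_of_rays (J : Type) (R : nat -> V) (L : J -> nat -> V)
    (P : list V -> Prop) : Prop :=
  let in_union v := in_ray R v \/ exists k, in_ray (L k) v in
  is_ray R /\ (forall j, is_ray (L j)) /\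
  (forall j v, in_ray R v -> ~ in_ray (L j) v) /\
  (forall j k, j <> k -> forall v, in_ray (L j) v -> ~ in_ray (L k) v) /\
  (forall p, P p -> is_path p /\
     exists x m y j, p = x :: m ++ [y] /\ in_ray R x /\ in_ray (L j) y /\
       forall v, In v m -> ~ in_union v) /\
  (forall p q, P p -> P q -> p <> q -> forall v, inner_vertex p v -> ~ In v q) /\
  (forall j, exists f : nat -> list V,
     (forall n, P (f n)) /\
     (forall n, exists t y, f n = t ++ [y] /\ in_ray (L j) y) /\
     (forall n m, n <> m -> disjoint_lists (f n) (f m))).

End Graphs.

(* Call a vertex [u] of [U] heavy if uncountably many of the combs have a tooth ending at
   [u]. As every vertex lies in the interior of at most one comb, some comb at a heavy [u]
   avoids any given finite set, so [u] can be joined through that comb to a tail of a fixed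
   ray [R0] of [eps]. This lets a path be extended, alternately, through the countably many
   heavy vertices and back to [R0]; in the limit it becomes a ray [R] of [eps] containing
   all heavy vertices. Only countably many combs are spoiled: those whose interior meets
   [R], and those with a tooth ending at one of the countably many light vertices. Each of
   the others -- as many as all the combs -- has its teeth starting on [R], and these teeth
   make its spine a leaf of a star of rays with centre [R]. *)

From Stdlib Require Import List Arith Lia Classical ClassicalEpsilon ProofIrrelevance Cantor FinFun.
Import ListNotations.

Fixpoint count_below (A : nat -> Prop) (n : nat) : nat :=
  match n with
  | 0 => 0
  | S n => count_below A n + if excluded_middle_informative (A n) then 1 else 0
  end.

Lemma count_below_mono A a b : a <= b -> count_below A a <= count_below A b.
Proof. induction 1; simpl; [lia|]. destruct (excluded_middle_informative _); lia. Qed.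

Lemma count_below_strict A a b : a < b -> A a -> count_below A a < count_below A b.
Proof.
  intros Hab Ha. apply Nat.lt_le_trans with (count_below A (S a)).
  - simpl. destruct (excluded_middle_informative (A a)); [lia|contradiction].
  - apply count_below_mono; lia.
Qed.

Lemma count_below_bijective (A : nat -> Prop) : (forall N, exists n, N <= n /\ A n) ->
  (forall a b, A a -> A b -> count_below A a = count_below A b -> a = b) /\
  (forall k, exists a, A a /\ count_below A a = k).
Proof.
  intros Hinf. split.
  - intros a b Ha Hb E. destruct (Nat.lt_total a b) as [H|[H|H]]; auto.
    + pose proof (count_below_strict A a b H Ha); lia.
    + pose proof (count_below_strict A b a H Hb); lia.
  - assert (Hunb : forall k, exists N, k <= count_below A N).
    { induction k as [|k [N HN]]; [exists 0; lia|].
      destruct (Hinf N) as [n [Hn An]]. exists (S n). simpl.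
      destruct (excluded_middle_informative (A n)); [|contradiction].
      pose proof (count_below_mono A N n Hn). lia. }
    assert (Hhit : forall N k, k < count_below A N -> exists n, A n /\ count_below A n = k).
    { induction N; intros k Hk; simpl in Hk; [lia|].
      destruct (excluded_middle_informative (A N)) as [HA|HA].
      - destruct (Nat.lt_total k (count_below A N)) as [H|[H|H]];
          [apply IHN; auto|exists N; auto|lia].
      - apply IHN; lia. }
    intros k. destruct (Hunb (S k)) as [N HN]. apply (Hhit N). lia.
Qed.

Section Countability.
Context {T : Type}.

Lemma countable_set_sub (P Q : T -> Prop) :
  (forall x, P x -> Q x) -> countable_set Q -> countable_set P.
Proof. intros HPQ [g Hg]. exists g. auto. Qed.

Lemma countable_set_subsingleton (P : T -> Prop) :
  (forall x y, P x -> P y -> x = y) -> countable_set P.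
Proof. intros H. exists (fun _ => 0). auto. Qed.

Lemma countable_set_union (P Q : T -> Prop) :
  countable_set P -> countable_set Q -> countable_set (fun x => P x \/ Q x).
Proof.
  intros [gP HgP] [gQ HgQ].
  exists (fun x => if excluded_middle_informative (P x) then 2 * gP x else S (2 * gQ x)).
  intros x y Hx Hy E.
  destruct (excluded_middle_informative (P x)) as [Px|nPx];
  destruct (excluded_middle_informative (P y)) as [Py|nPy]; try lia.
  - apply HgP; auto; lia.
  - apply HgQ; [tauto|tauto|lia].
Qed.

Lemma countable_set_bigcup {J : Type} (A : J -> Prop) (K : J -> T -> Prop) :
  countable_set A -> (forall j, A j -> countable_set (K j)) ->
  countable_set (fun x => exists j, A j /\ K j x).
Proof.
  intros [gA HgA] HK.
  destruct (classic (exists j, A j)) as [[j0 _]|Hempty].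
  2:{ apply countable_set_subsingleton. intros x y [j [Aj _]]. exfalso; eauto. }
  set (index := fun x => epsilon (inhabits j0) (fun j => A j /\ K j x)).
  set (gK := fun j => epsilon (inhabits (fun _ : T => 0))
                        (fun g => forall x y, K j x -> K j y -> g x = g y -> x = y)).
  assert (Hindex : forall x, (exists j, A j /\ K j x) -> A (index x) /\ K (index x) x)
    by (intros x; exact (epsilon_spec _ (fun j => A j /\ K j x))).
  assert (HgK : forall j, A j -> forall x y, K j x -> K j y -> gK j x = gK j y -> x = y)
    by (intros j Aj;
        exact (epsilon_spec _ (fun g => forall x y, K j x -> K j y -> g x = g y -> x = y)
                 (HK j Aj))).
  exists (fun x => to_nat (gA (index x), gK (index x) x)).
  intros x y Hx Hy E. apply to_nat_inj in E. injection E as EA EK.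
  destruct (Hindex x Hx) as [Ax Kx]. destruct (Hindex y Hy) as [Ay Ky].
  assert (Eidx : index x = index y) by (apply HgA; auto).
  rewrite Eidx in Kx, EK. exact (HgK _ Ay x y Kx Ky EK).
Qed.

Lemma countable_set_In (l : list T) : countable_set (fun x => In x l).
Proof.
  exists (fun x => epsilon (inhabits 0) (fun k => nth_error l k = Some x)).
  assert (Hpos : forall x, In x l ->
            nth_error l (epsilon (inhabits 0) (fun k => nth_error l k = Some x)) = Some x)
    by (intros x Hx; apply epsilon_spec, In_nth_error, Hx).
  intros x y Hx Hy E. pose proof (Hpos x Hx) as Ex. rewrite E, Hpos in Ex by exact Hy.
  congruence.
Qed.

Lemma countable_set_range (e : nat -> T) : countable_set (fun x => exists n, e n = x).
Proof.
  exists (fun x => epsilon (inhabits 0) (fun n => e n = x)).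
  intros x y Hx Hy E.
  rewrite <- (epsilon_spec (inhabits 0) _ Hx), <- (epsilon_spec (inhabits 0) _ Hy), E.
  reflexivity.
Qed.

Lemma uncountable_set_of_countable_complement (P : T -> Prop) :
  ~ (exists f : T -> nat, forall x y, f x = f y -> x = y) ->
  countable_set (fun x => ~ P x) -> ~ countable_set P.
Proof.
  intros Hunc HnP HP. destruct (countable_set_union _ _ HP HnP) as [g Hg].
  apply Hunc. exists g. intros x y. apply Hg; apply classic.
Qed.

Lemma uncountable_set_injective_seq (P : T -> Prop) : ~ countable_set P ->
  exists e : nat -> T, (forall n m, e n = e m -> n = m) /\ forall n, P (e n).
Proof.
  intros HP.
  assert (Hfresh : forall l, exists x, P x /\ ~ In x l).
  { intros l. apply NNPP. intros Hn. apply HP.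
    apply (countable_set_sub _ (fun x => In x l)); [|apply countable_set_In].
    intros x Px. apply NNPP. eauto. }
  destruct (Hfresh []) as [x0 _].
  set (fresh := fun l => epsilon (inhabits x0) (fun x => P x /\ ~ In x l)).
  assert (Hf : forall l, P (fresh l) /\ ~ In (fresh l) l)
    by (intros l; apply epsilon_spec, Hfresh).
  set (chosen := fix chosen n := match n with 0 => [] | S n => fresh (chosen n) :: chosen n end).
  assert (Hchosen : forall n m, n < m -> In (fresh (chosen n)) (chosen m)).
  { intros n m H. induction H; simpl; auto. }
  exists (fun n => fresh (chosen n)). split; [|intros n; apply Hf].
  intros n m E. destruct (Nat.lt_total n m) as [H|[H|H]]; auto; exfalso.
  - apply (proj2 (Hf (chosen m))). rewrite <- E. auto.
  - apply (proj2 (Hf (chosen n))). rewrite E. auto.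
Qed.

Lemma countable_infinite_set_enum (D : T -> Prop) (e : nat -> T) :
  (forall n m, e n = e m -> n = m) -> (forall n, D (e n)) -> countable_set D ->
  exists beta : T -> nat, (forall x y, D x -> D y -> beta x = beta y -> x = y) /\
                          (forall k, exists x, D x /\ beta x = k).
Proof.
  intros He HeD [g Hg].
  set (A := fun n => exists x, D x /\ g x = n).
  assert (Hunb : forall N, exists n, N <= n /\ A n).
  { intros N. apply NNPP. intros Hbounded.
    assert (Hsmall : forall n, g (e n) < N).
    { intros n. apply NNPP. intros Hn. apply Hbounded. exists (g (e n)).
      split; [lia|]. exists (e n); auto. }
    assert (Hinj : Injective (fun n => g (e n))) by (intros n m E; apply He, Hg; auto).
    pose proof (NoDup_incl_length (l := map (fun n => g (e n)) (seq 0 (S N))) (l' := seq 0 N))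
      as Hlen.
    rewrite length_map, !length_seq in Hlen. apply (Nat.nle_succ_diag_l N), Hlen.
    - apply Injective_map_NoDup; [exact Hinj|apply seq_NoDup].
    - intros k Hk. apply in_map_iff in Hk. destruct Hk as [n [<- _]].
      apply in_seq. specialize (Hsmall n). lia. }
  destruct (count_below_bijective A Hunb) as [Hcinj Hcsurj].
  exists (fun x => count_below A (g x)). split.
  - intros x y Dx Dy E. apply Hg; auto. apply Hcinj; auto; [exists x|exists y]; auto.
  - intros k. destruct (Hcsurj k) as [n [[x [Dx <-]] Ek]]. eauto.
Qed.

(* Hilbert's hotel: the countably many points outside [S] are absorbed by the copy of [nat]
   inside [S] given by [e]. *)
Lemma sig_bijection_of_countable_complement (S : T -> Prop) (e : nat -> T) :
  (forall n m, e n = e m -> n = m) -> (forall n, S (e n)) -> countable_set (fun x => ~ S x) ->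
  exists f : {x | S x} -> T, (forall a b, f a = f b -> a = b) /\ (forall x, exists a, f a = x).
Proof.
  intros He HeS HnS.
  set (D := fun x => ~ S x \/ exists n, e n = x).
  destruct (countable_infinite_set_enum D e He (fun n => or_intror (ex_intro _ n eq_refl))
              (countable_set_union _ _ HnS (countable_set_range e))) as [beta [Hbinj Hbsurj]].
  set (index := fun x => epsilon (inhabits 0) (fun n => e n = x)).
  assert (Hindex : forall x, (exists n, e n = x) -> e (index x) = x)
    by (intros x; exact (epsilon_spec _ (fun n => e n = x))).
  set (unbeta := fun k => epsilon (inhabits (e 0)) (fun x => D x /\ beta x = k)).
  assert (Hunbeta : forall k, D (unbeta k) /\ beta (unbeta k) = k)
    by (intros k; exact (epsilon_spec _ (fun x => D x /\ beta x = k) (Hbsurj k))).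
  exists (fun a => if excluded_middle_informative (exists n, e n = proj1_sig a)
                   then unbeta (index (proj1_sig a)) else proj1_sig a).
  split.
  - intros [a Sa] [b Sb]. simpl. intros E.
    assert (a = b) as <-.
    { destruct (excluded_middle_informative (exists n, e n = a)) as [Ea|Ea];
      destruct (excluded_middle_informative (exists n, e n = b)) as [Eb|Eb].
      - rewrite <- (Hindex a Ea), <- (Hindex b Eb),
          <- (proj2 (Hunbeta (index a))), <- (proj2 (Hunbeta (index b))), E.
        reflexivity.
      - destruct (proj1 (Hunbeta (index a))) as [H|H]; rewrite E in H; contradiction.
      - destruct (proj1 (Hunbeta (index b))) as [H|H]; rewrite <- E in H; contradiction.
      - exact E. }
    f_equal. apply proof_irrelevance.
  - intros x. destruct (classic (D x)) as [Dx|nDx].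
    + exists (exist _ (e (beta x)) (HeS _)). simpl.
      destruct (excluded_middle_informative (exists n, e n = e (beta x))) as [_|H];
        [|exfalso; eauto].
      rewrite (He _ _ (Hindex _ (ex_intro _ (beta x) eq_refl))).
      apply Hbinj; [apply Hunbeta|exact Dx|apply Hunbeta].
    + assert (Sx : S x) by (apply NNPP; intros H; apply nDx; left; exact H).
      exists (exist _ x Sx). simpl.
      destruct (excluded_middle_informative (exists n, e n = x)) as [H|_]; auto.
      exfalso; apply nDx; right; exact H.
Qed.

End Countability.

Lemma nat_dependent_choice {A : Type} (Inv : A -> Prop) (Rel : nat -> A -> A -> Prop) (a0 : A) :
  Inv a0 -> (forall n a, Inv a -> exists a', Inv a' /\ Rel n a a') ->
  exists f : nat -> A, forall n, Inv (f n) /\ Rel n (f n) (f (S n)).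
Proof.
  intros H0 Hstep.
  set (next := fun n a => epsilon (inhabits a0) (fun a' => Inv a' /\ Rel n a a')).
  set (f := fix f n := match n with 0 => a0 | S n => next n (f n) end).
  assert (Hnext : forall n a, Inv a -> Inv (next n a) /\ Rel n a (next n a))
    by (intros n a Ha; apply epsilon_spec, Hstep, Ha).
  assert (Hf : forall n, Inv (f n)) by (induction n; [exact H0|apply Hnext, IHn]).
  exists f. intros n. split; [apply Hf|apply Hnext, Hf].
Qed.

Section Walks.
Context {V : Type} (adj : V -> V -> Prop) (Hsym : forall x y, adj x y -> adj y x).

Lemma chain_app l1 a l2 :
  chain adj (l1 ++ a :: l2) <-> chain adj (l1 ++ [a]) /\ chain adj (a :: l2).
Proof.
  induction l1 as [|b [|c l1] IH]; simpl in *.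
  - tauto.
  - tauto.
  - rewrite IH. tauto.
Qed.

Lemma chain_suffix l1 l2 : chain adj (l1 ++ l2) -> chain adj l2.
Proof.
  induction l1 as [|a [|b l1] IH]; simpl; auto.
  - destruct l2; tauto.
  - intros [_ H]. exact (IH H).
Qed.

Lemma chain_prefix l1 l2 : chain adj (l1 ++ l2) -> chain adj l1.
Proof.
  destruct l2 as [|a l2]; [rewrite app_nil_r; auto|].
  intros H. apply chain_app in H. destruct H as [H _]. revert H.
  induction l1 as [|b [|c l1] IH]; simpl in *; tauto.
Qed.

Lemma chain_rev l : chain adj l -> chain adj (rev l).
Proof.
  induction l as [|a [|b l] IH]; simpl; auto.
  intros [Hab Hl]. specialize (IH Hl). simpl in IH.
  rewrite <- app_assoc. apply chain_app. simpl. auto.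
Qed.

Lemma chain_nth l d a : chain adj l -> S a < length l -> adj (nth a l d) (nth (S a) l d).
Proof.
  revert a. induction l as [|x [|y l] IH]; simpl; intros a H Hl; [lia|lia|].
  destruct a; simpl; [tauto|]. apply (IH a); simpl; [tauto|lia].
Qed.

Lemma last_cons_indep (x : V) l d1 d2 : last (x :: l) d1 = last (x :: l) d2.
Proof. revert x. induction l as [|a l IH]; intros x; [reflexivity|]. exact (IH a). Qed.

Lemma last_app_cons (l1 : list V) x l2 d : last (l1 ++ x :: l2) d = last (x :: l2) x.
Proof.
  induction l1 as [|a l1 IH]; simpl; [apply last_cons_indep|].
  destruct (l1 ++ x :: l2) eqn:E; [destruct l1; discriminate|exact IH].
Qed.

Lemma last_In (x : V) l : In (last (x :: l) x) (x :: l).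
Proof.
  revert x. induction l as [|a l IH]; intros x; [left; reflexivity|].
  change (last (x :: a :: l) x) with (last (a :: l) x).
  rewrite (last_cons_indep a l x a). right; apply IH.
Qed.

(* A walk from [x] to [y]; [l] lists the vertices after [x]. *)
Definition walk (x : V) (l : list V) (y : V) := chain adj (x :: l) /\ last (x :: l) x = y.

Lemma walk_nil x : walk x [] x.
Proof. split; simpl; auto. Qed.

Lemma walk_app x l1 y l2 z : walk x l1 y -> walk y l2 z -> walk x (l1 ++ l2) z.
Proof.
  intros [H1 E1] [H2 E2].
  destruct (exists_last (l := x :: l1) ltac:(discriminate)) as [l0 [a Ha]].
  rewrite Ha, last_last in E1. subst a.
  assert (Heq : x :: l1 ++ l2 = l0 ++ y :: l2)
    by (rewrite app_comm_cons, Ha, <- app_assoc; reflexivity).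
  split.
  - rewrite Heq. apply chain_app. rewrite <- Ha. auto.
  - rewrite Heq, last_app_cons. exact E2.
Qed.

Lemma walk_rev x l y : walk x l y ->
  exists l', walk y l' x /\ forall v, In v (y :: l') <-> In v (x :: l).
Proof.
  intros [H E].
  destruct (exists_last (l := x :: l) ltac:(discriminate)) as [l0 [a Ha]].
  rewrite Ha, last_last in E. subst a.
  assert (Hr : y :: rev l0 = rev (x :: l)) by (rewrite Ha, rev_unit; reflexivity).
  exists (rev l0). split; [split|].
  - rewrite Hr. apply chain_rev; auto.
  - rewrite Hr. simpl. apply last_last.
  - intros v. rewrite Hr, <- in_rev. tauto.
Qed.

Lemma walk_to_path x l y : walk x l y ->
  exists l', walk x l' y /\ NoDup (x :: l') /\ forall v, In v (x :: l') -> In v (x :: l).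
Proof.
  revert x. induction l as [|z l IH]; intros x [Hc E].
  - exists []. split; [split; auto|split; [repeat constructor; auto|auto]].
  - simpl in Hc. destruct Hc as [Hxz Hc].
    destruct (IH z) as [l' [[Hc' E'] [Hnd Hsub]]].
    { split; auto. simpl in E |- *. rewrite <- E. apply last_cons_indep. }
    destruct (classic (In x (z :: l'))) as [Hin|Hnin].
    + apply in_split in Hin. destruct Hin as [a [b Hab]]. rewrite Hab in Hc', E', Hnd.
      exists b. split; [split|split].
      * exact (chain_suffix _ _ Hc').
      * rewrite last_app_cons in E'. exact E'.
      * exact (NoDup_app_remove_l _ _ Hnd).
      * intros v Hv. right. apply Hsub. rewrite Hab. apply in_or_app. right; exact Hv.
    + exists (z :: l'). split; [split|split].
      * simpl. split; auto.
      * simpl in E' |- *. rewrite <- E'. apply last_cons_indep.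
      * constructor; auto.
      * intros v [Hv|Hv]; [left; auto|right; apply Hsub; auto].
Qed.

Lemma walk_of_path p x t t' y : is_path adj p -> p = x :: t -> p = t' ++ [y] -> walk x t y.
Proof.
  intros [_ [_ Hc]] E1 E2. split; [rewrite <- E1; exact Hc|].
  rewrite <- E1, E2, last_last. reflexivity.
Qed.

Lemma ray_segment_up (r : nat -> V) (Hr : forall n, adj (r n) (r (S n))) i d :
  walk (r i) (map r (seq (S i) d)) (r (i + d)) /\
  forall v, In v (r i :: map r (seq (S i) d)) -> exists k, v = r k /\ i <= k.
Proof.
  revert i. induction d as [|d IH]; intros i.
  - simpl. rewrite Nat.add_0_r. split; [apply walk_nil|]. intros v [<-|[]]. eauto.
  - destruct (IH (S i)) as [[Hc E] Hin]. split; [split|].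
    + simpl. split; auto.
    + simpl in E |- *. rewrite Nat.add_succ_r, <- E. apply last_cons_indep.
    + intros v [<-|Hv]; [eauto|]. destruct (Hin v Hv) as [k [-> Hk]].
      exists k; split; auto; lia.
Qed.

Lemma ray_segment (r : nat -> V) (Hr : forall n, adj (r n) (r (S n))) i j :
  exists l, walk (r i) l (r j) /\
    forall v, In v (r i :: l) -> exists k, v = r k /\ Nat.min i j <= k.
Proof.
  destruct (le_lt_dec i j) as [Hij|Hij].
  - destruct (ray_segment_up r Hr i (j - i)) as [Hw Hin].
    replace (i + (j - i)) with j in Hw by lia.
    eexists; split; [exact Hw|]. intros v Hv. destruct (Hin v Hv) as [k [-> Hk]].
    exists k; split; auto; lia.
  - destruct (ray_segment_up r Hr j (i - j)) as [Hw Hin].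
    replace (j + (i - j)) with i in Hw by lia.
    destruct (walk_rev _ _ _ Hw) as [l' [Hw' Hiff]].
    exists l'; split; auto. intros v Hv. apply Hiff in Hv. destruct (Hin v Hv) as [k [-> Hk]].
    exists k; split; auto; lia.
Qed.

Lemma rev_cons_snoc (x : V) m y : rev (x :: m ++ [y]) = y :: rev m ++ [x].
Proof. simpl. rewrite rev_unit. reflexivity. Qed.

Lemma AB_path_decompose A B p : AB_path adj A B p -> (forall v, A v -> ~ B v) ->
  exists x m y, p = x :: m ++ [y] /\ A x /\ B y /\ forall v, In v m -> ~ A v /\ ~ B v.
Proof.
  intros [Hp [[x [t [E1 [Ax Ht]]]] [[|x' m] [y [E2 [By Ht']]]]]] HAB.
  - rewrite E2 in E1. injection E1 as -> ->. exfalso; exact (HAB _ Ax By).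
  - rewrite E1 in E2. injection E2 as <- Et.
    exists x, m, y. rewrite E1, Et. split; [reflexivity|]. do 2 (split; auto).
    intros v Hv. split.
    + apply Ht. rewrite Et. apply in_or_app; auto.
    + apply Ht'. right; auto.
Qed.

Lemma AB_path_single A B x : A x -> B x -> AB_path adj A B [x].
Proof.
  intros Ax Bx. split; [|split].
  - split; [discriminate|split; [repeat constructor; auto|exact I]].
  - exists x, []. split; [reflexivity|split; [exact Ax|intros _ []]].
  - exists [], x. split; [reflexivity|split; [exact Bx|intros _ []]].
Qed.

Lemma equiv_rays_of_common_vertices (R1 R2 : nat -> V) (q : nat -> V) :
  (forall n m, q n = q m -> n = m) -> (forall n, in_ray R1 (q n) /\ in_ray R2 (q n)) ->
  equiv_rays adj R1 R2.
Proof.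
  intros Hq Hcommon. exists (fun n => [q n]). split.
  - intros n. apply AB_path_single; apply Hcommon.
  - intros n m Hnm v [<-|[]] [E|[]]. exact (Hnm (eq_sym (Hq _ _ E))).
Qed.

Lemma disjoint_family_avoids (f : nat -> list V)
  (Hf : forall n m, n <> m -> disjoint_lists (f n) (f m)) X :
  forall N, exists n, N <= n /\ disjoint_lists (f n) X.
Proof.
  induction X as [|x X IH]; intros N.
  - exists N. split; auto. intros v _ [].
  - destruct (IH N) as [n [Hn Hav]].
    destruct (classic (In x (f n))) as [Hx|Hx].
    + destruct (IH (S n)) as [n' [Hn' Hav']].
      destruct (classic (In x (f n'))) as [Hx'|Hx'].
      * exfalso. refine (Hf n n' _ x Hx Hx'). lia.
      * exists n'. split; [lia|]. intros v Hv [E|E]; [subst; auto|]. exact (Hav' v Hv E).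
    + exists n. split; auto. intros v Hv [E|E]; [subst; auto|]. exact (Hav v Hv E).
Qed.

Lemma split_at_first (l : list V) (p : V -> Prop) : (exists v, In v l /\ p v) ->
  exists l1 v l2, l = l1 ++ v :: l2 /\ p v /\ forall w, In w l1 -> ~ p w.
Proof.
  induction l as [|a l IH]; intros [v [Hv Hp]]; [destruct Hv|].
  destruct (classic (p a)) as [Ha|Ha].
  - exists [], a, l. split; [reflexivity|]. split; [exact Ha|]. intros w [].
  - destruct Hv as [<-|Hv]; [contradiction|].
    destruct IH as [l1 [w [l2 [E [Hw Hl1]]]]]; [eauto|].
    exists (a :: l1), w, l2. rewrite E. split; [reflexivity|]. split; auto.
    intros w' [<-|Hw']; auto.
Qed.

End Walks.

Section LimitRay.
Context {V : Type} (adj : V -> V -> Prop) (d : V) (stage : nat -> list V)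
  (stage_nonempty : stage 0 <> [])
  (stage_grow : forall n, exists ext, stage (S n) = stage n ++ ext /\ ext <> [])
  (stage_nodup : forall n, NoDup (stage n)) (stage_chain : forall n, chain adj (stage n)).

Lemma stage_prefix n m : n <= m -> exists l, stage m = stage n ++ l.
Proof.
  induction 1 as [|m _ [l E]]; [exists []; rewrite app_nil_r; auto|].
  destruct (stage_grow m) as [ext [E' _]]. exists (l ++ ext). rewrite E', E, app_assoc; auto.
Qed.

Lemma stage_length n : n < length (stage n).
Proof.
  induction n.
  - destruct (stage 0); [contradiction|simpl; lia].
  - destruct (stage_grow n) as [[|x ext] [E Hne]]; [contradiction|].
    rewrite E, length_app. simpl. lia.
Qed.

(* Stage [m] has more than [m] vertices, so the default [d] is never used. *)
Definition limit_ray (m : nat) : V := nth m (stage m) d.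

Lemma nth_stage_limit n m : m < length (stage n) -> nth m (stage n) d = limit_ray m.
Proof.
  intros Hm. unfold limit_ray. destruct (le_lt_dec n m) as [H|H].
  - destruct (stage_prefix n m H) as [l E]. rewrite E, app_nth1; auto.
  - destruct (stage_prefix m n (Nat.lt_le_incl _ _ H)) as [l E]. rewrite E, app_nth1; auto.
    apply stage_length.
Qed.

Lemma in_limit_ray v : in_ray limit_ray v <-> exists n, In v (stage n).
Proof.
  split.
  - intros [m <-]. exists m. apply nth_In, stage_length.
  - intros [n Hv]. apply In_nth with (d := d) in Hv. destruct Hv as [m [Hm E]].
    exists m. rewrite <- (nth_stage_limit n m Hm). exact E.
Qed.

Lemma limit_ray_is_ray : is_ray adj limit_ray.
Proof.
  split.
  - intros a b E. set (n := Nat.max a b).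
    assert (a < length (stage n)) by (pose proof (stage_length n); lia).
    assert (b < length (stage n)) by (pose proof (stage_length n); lia).
    rewrite <- (nth_stage_limit n a), <- (nth_stage_limit n b) in E by assumption.
    eapply NoDup_nth; eauto.
  - intros a. pose proof (stage_length (S a)).
    rewrite <- (nth_stage_limit (S a) a), <- (nth_stage_limit (S a) (S a)) by lia.
    apply chain_nth; auto.
Qed.

Lemma last_stage_fresh n : ~ In (last (stage (S n)) d) (stage n).
Proof.
  destruct (stage_grow n) as [ext [E Hne]]. destruct (exists_last Hne) as [ext' [z ->]].
  pose proof (stage_nodup (S n)) as Hnd. rewrite E, app_assoc in Hnd |- *. rewrite last_last.
  intros Hz. apply (NoDup_remove_2 _ _ _ Hnd). rewrite app_nil_r. apply in_or_app. auto.
Qed.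

Lemma last_stage_In n : In (last (stage n) d) (stage n).
Proof.
  pose proof (stage_length n) as Hn. destruct (stage n) as [|x t]; [simpl in Hn; lia|].
  rewrite (last_cons_indep x t d x). apply last_In.
Qed.

Lemma last_stage_injective n m : last (stage n) d = last (stage m) d -> n = m.
Proof.
  assert (Hlt : forall n m, n < m -> last (stage n) d <> last (stage m) d).
  { intros a [|b] Hab E; [lia|]. apply (last_stage_fresh b). rewrite <- E.
    destruct (stage_prefix a b) as [l El]; [lia|]. rewrite El. apply in_or_app. left.
    apply last_stage_In. }
  intros E. destruct (Nat.lt_total n m) as [H|[H|H]]; auto; exfalso.
  - exact (Hlt n m H E).
  - exact (Hlt m n H (eq_sym E)).
Qed.

(* The ends of the stages are infinitely many distinct common vertices. *)
Lemma limit_ray_equiv (R : nat -> V) : (forall n, in_ray R (last (stage n) d)) ->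
  equiv_rays adj R limit_ray.
Proof.
  intros HR. apply (equiv_rays_of_common_vertices adj _ _ (fun n => last (stage n) d)).
  - exact last_stage_injective.
  - intros n. split; [apply HR|]. apply in_limit_ray. exists n. apply last_stage_In.
Qed.

End LimitRay.

Section Combs.
Context {V : Type} (adj : V -> V -> Prop) (Hsym : forall x y, adj x y -> adj y x)
  (eps : (nat -> V) -> Prop) (R0 : nat -> V) (HR0 : is_ray adj R0)
  (Heps : forall R, eps R <-> is_ray adj R /\ equiv_rays adj R0 R)
  (U : V -> Prop) (I : Type) (C : I -> comb)
  (HC : forall i, is_comb adj eps U (C i))
  (Hdisj : forall i j, i <> j -> internally_disjoint U (C i) (C j)).

Lemma interior_unique i j v : comb_interior U (C i) v -> comb_interior U (C j) v -> i = j.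
Proof. intros Hi Hj. apply NNPP. intros E. exact (Hdisj i j E v Hi Hj). Qed.

Lemma spine_interior i k : comb_interior U (C i) (spine (C i) k).
Proof.
  destruct (HC i) as [_ [_ [Hoff _]]]. split; [left; exists k; auto|apply Hoff; exists k; auto].
Qed.

Lemma tooth_decompose i n : exists x m y,
  teeth (C i) n = x :: m ++ [y] /\ in_ray (spine (C i)) x /\ U y /\
  forall v, In v m -> comb_interior U (C i) v /\ ~ in_ray (spine (C i)) v.
Proof.
  destruct (HC i) as [_ [_ [Hoff [Hteeth _]]]].
  destruct (AB_path_decompose adj _ _ _ (Hteeth n) Hoff) as [x [m [y [E [Hx [Uy Hm]]]]]].
  exists x, m, y. do 3 (split; auto). intros v Hv. split; [|apply Hm, Hv].
  split; [right; exists n; rewrite E; right; apply in_or_app; auto|apply Hm, Hv].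
Qed.

Definition attaches (u : V) (i : I) : Prop := exists n t, teeth (C i) n = t ++ [u].

Definition heavy (u : V) : Prop := ~ countable_set (attaches u).

Lemma attaches_tooth u i : attaches u i -> exists n x m,
  teeth (C i) n = x :: m ++ [u] /\ in_ray (spine (C i)) x /\ U u /\
  forall v, In v m -> comb_interior U (C i) v /\ ~ in_ray (spine (C i)) v.
Proof.
  intros [n [t Et]]. destruct (tooth_decompose i n) as [x [m [y [E H]]]].
  rewrite E in Et. apply (app_inj_tail (x :: m) t) in Et. destruct Et as [_ <-].
  exists n, x, m. auto.
Qed.

Lemma attaches_U u i : attaches u i -> U u.
Proof. intros H. destruct (attaches_tooth u i H) as [n [x [m [_ [_ [Uu _]]]]]]. exact Uu. Qed.

Lemma heavy_U u : heavy u -> U u.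
Proof.
  intros Hu. apply NNPP. intros nUu. apply Hu, countable_set_subsingleton.
  intros i j Hi _. exfalso. exact (nUu (attaches_U u i Hi)).
Qed.

Definition tail_avoids (F : list V) (k : nat) : Prop := forall j, k <= j -> ~ In (R0 j) F.

Definition links_to_tail (F : list V) (x : V) : Prop :=
  exists l k, walk adj x l (R0 k) /\ disjoint_lists (x :: l) F /\ tail_avoids F k.

Lemma tail_avoids_exists F : exists k, tail_avoids F k.
Proof.
  induction F as [|v F [k Hk]]; [exists 0; intros j _ []|].
  destruct (classic (exists j, v = R0 j)) as [[j0 ->]|Hv].
  - exists (Nat.max k (S j0)). intros j Hj [E|E].
    + apply (proj1 HR0) in E. lia.
    + apply (Hk j); auto; lia.
  - exists k. intros j Hj [E|E]; [apply Hv; eauto|exact (Hk j Hj E)].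
Qed.

Lemma links_to_tail_R0 F k : tail_avoids F k -> links_to_tail F (R0 k).
Proof.
  intros Hk. exists [], k. split; [apply walk_nil|split; auto].
  intros v [<-|[]]. apply Hk. auto.
Qed.

Lemma links_to_tail_prepend F x l y :
  walk adj x l y -> disjoint_lists (x :: l) F -> links_to_tail F y -> links_to_tail F x.
Proof.
  intros Hw Hd [l' [k [Hw' [Hd' Hk]]]]. exists (l ++ l'), k.
  split; [exact (walk_app adj _ _ _ _ _ Hw Hw')|split; auto].
  intros v Hv. rewrite app_comm_cons in Hv. apply in_app_or in Hv.
  destruct Hv as [Hv|Hv]; [exact (Hd v Hv)|exact (Hd' v (or_intror Hv))].
Qed.

Lemma links_to_tail_connect F x y : links_to_tail F x -> links_to_tail F y ->
  exists l, walk adj x l y /\ disjoint_lists (x :: l) F.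
Proof.
  intros [l1 [a [Hw1 [Hd1 Ha]]]] [l2 [b [Hw2 [Hd2 Hb]]]].
  destruct (walk_rev adj Hsym _ _ _ Hw2) as [l2' [Hw2' Hiff]].
  destruct (ray_segment adj Hsym R0 (proj2 HR0) a b) as [ls [Hws Hins]].
  exists (l1 ++ ls ++ l2'). split.
  - exact (walk_app adj _ _ _ _ _ Hw1 (walk_app adj _ _ _ _ _ Hws Hw2')).
  - intros v Hv. rewrite app_comm_cons in Hv. apply in_app_or in Hv.
    destruct Hv as [Hv|Hv]; [exact (Hd1 v Hv)|].
    apply in_app_or in Hv. destruct Hv as [Hv|Hv].
    + destruct (Hins v (or_intror Hv)) as [k [-> Hk]].
      destruct (Nat.min_spec a b) as [[_ E]|[_ E]]; rewrite E in Hk; [apply Ha|apply Hb]; lia.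
    + apply Hd2, Hiff. right; exact Hv.
Qed.

(* Of the infinitely many disjoint [R0]--[R] paths, all but finitely many avoid both [F]
   and the initial segment of [R0] that meets [F]. *)
Lemma ray_links_to_tail F R : eps R -> (forall k, ~ In (R k) F) ->
  forall k, links_to_tail F (R k).
Proof.
  intros HR HRF k. destruct (proj1 (Heps R) HR) as [[_ Hadj] [f [Hf Hfd]]].
  destruct (tail_avoids_exists F) as [M HM].
  destruct (disjoint_family_avoids f Hfd (F ++ map R0 (seq 0 M)) 0) as [n [_ Hn]].
  destruct (Hf n) as [Hp [[x [t [E1 [[a <-] _]]]] [t' [y [E2 [[b <-] _]]]]]].
  assert (HaM : M <= a).
  { apply NNPP. intros Ha. apply (Hn (R0 a)); [rewrite E1; left; auto|].
    apply in_or_app; right. apply in_map, in_seq. lia. }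
  destruct (walk_rev adj Hsym _ _ _ (walk_of_path adj _ _ _ _ _ Hp E1 E2)) as [l [Hw Hiff]].
  destruct (ray_segment adj Hsym R Hadj k b) as [ls [Hws Hins]].
  apply (links_to_tail_prepend _ _ _ _ Hws).
  { intros v Hv. destruct (Hins v Hv) as [j [-> _]]. apply HRF. }
  apply (links_to_tail_prepend _ _ _ _ Hw).
  { intros v Hv HvF. apply (Hn v); [rewrite E1; apply Hiff, Hv|apply in_or_app; auto]. }
  apply links_to_tail_R0. intros j Hj. apply HM. lia.
Qed.

(* Each vertex of [F] lies in the interior of at most one comb. *)
Lemma heavy_comb_avoiding F u : heavy u ->
  exists i, attaches u i /\ forall v, In v F -> ~ comb_interior U (C i) v.
Proof.
  intros Hu. apply NNPP. intros Hn. apply Hu.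
  apply (countable_set_sub _ (fun i => exists v, In v F /\ comb_interior U (C i) v)).
  - intros i Hi. apply NNPP. intros Hno. apply Hn. exists i. split; auto.
    intros v Hv Hint. apply Hno. eauto.
  - apply countable_set_bigcup; [apply countable_set_In|].
    intros v _. apply countable_set_subsingleton. intros i j Hi Hj.
    exact (interior_unique i j v Hi Hj).
Qed.

Lemma heavy_links_to_tail F u : heavy u -> ~ In u F -> links_to_tail F u.
Proof.
  intros Hu HuF. destruct (heavy_comb_avoiding F u Hu) as [i [Hi HiF]].
  destruct (attaches_tooth u i Hi) as [n [x [m [E [[k <-] [_ Hm]]]]]].
  destruct (HC i) as [_ [Hspine [_ [Hteeth _]]]].
  assert (Hw : walk adj (spine (C i) k) (m ++ [u]) u)
    by (apply (walk_of_path adj (teeth (C i) n) _ _ (spine (C i) k :: m));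
        [apply Hteeth|auto|auto]).
  destruct (walk_rev adj Hsym _ _ _ Hw) as [l [Hw' Hiff]].
  apply (links_to_tail_prepend _ _ _ _ Hw').
  - intros v Hv HvF. apply Hiff in Hv. rewrite app_comm_cons in Hv.
    apply in_app_or in Hv. destruct Hv as [[<-|Hv]|[<-|[]]].
    + exact (HiF _ HvF (spine_interior i k)).
    + exact (HiF _ HvF (proj1 (Hm v Hv))).
    + exact (HuF HvF).
  - apply ray_links_to_tail; auto. intros j Hj. exact (HiF _ Hj (spine_interior i j)).
Qed.

(* The invariant of the construction: a path [F ++ [e]] whose end [e] can still be led to a
   tail of [R0] without touching the rest of the path. *)
Definition admissible (F : list V) (e : V) : Prop :=
  NoDup (F ++ [e]) /\ chain adj (F ++ [e]) /\ links_to_tail F e.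

Lemma append_disjoint_path F e q y : NoDup (F ++ [e]) -> chain adj (F ++ [e]) ->
  NoDup (e :: q ++ [y]) -> chain adj (e :: q ++ [y]) -> disjoint_lists (e :: q ++ [y]) F ->
  NoDup ((F ++ e :: q) ++ [y]) /\ chain adj ((F ++ e :: q) ++ [y]).
Proof.
  intros Hnd Hc Hndq Hcq Hd. rewrite <- app_assoc. simpl. split.
  - apply NoDup_app; [exact (NoDup_app_remove_r _ _ Hnd)|exact Hndq|].
    intros v HvF Hv. exact (Hd v Hv HvF).
  - apply chain_app. auto.
Qed.

Lemma NoDup_snoc_notin (F : list V) e : NoDup (F ++ [e]) -> ~ In e F.
Proof. intros H Hin. apply NoDup_remove_2 in H. rewrite app_nil_r in H. auto. Qed.

Lemma extend_to_heavy F e u : admissible F e -> heavy u -> ~ In u (F ++ [e]) ->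
  exists q, admissible (F ++ e :: q) u.
Proof.
  intros [Hnd [Hc He]] Hu HuFe.
  assert (HuF : ~ In u F) by (intros H; apply HuFe, in_or_app; auto).
  destruct (links_to_tail_connect F e u He (heavy_links_to_tail F u Hu HuF)) as [l [Hw Hd]].
  destruct (walk_to_path adj e l u Hw) as [p [[Hcp Ep] [Hndp Hsub]]].
  destruct (exists_last (l := e :: p) ltac:(discriminate)) as [[|e' q] [y Hq]].
  { injection Hq as -> ->. simpl in Ep. subst u. exfalso.
    apply HuFe, in_or_app. right; left; auto. }
  injection Hq as <- Hq. rewrite Hq, app_comm_cons, last_last in Ep. subst y.
  rewrite Hq in Hcp, Hndp, Hsub.
  destruct (append_disjoint_path F e q u Hnd Hc Hndp Hcp) as [Hnd' Hc'].
  { intros v Hv. apply Hd, Hsub, Hv. }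
  exists q. split; [exact Hnd'|split; [exact Hc'|]].
  apply heavy_links_to_tail; [exact Hu|]. apply NoDup_snoc_notin, Hnd'.
Qed.

(* Follow [R0] from the end of the link until it meets the tail [R0 M..] that avoids the
   whole current path, and stop at the first such vertex. *)
Lemma extend_to_tail F e : admissible F e ->
  exists q j, admissible (F ++ e :: q) (R0 j).
Proof.
  intros [Hnd [Hc [l [k [Hw [Hd Hk]]]]]].
  destruct (tail_avoids_exists (F ++ [e])) as [M HM].
  destruct (ray_segment adj Hsym R0 (proj2 HR0) k (Nat.max k M)) as [ls [Hws Hins]].
  assert (Hd' : disjoint_lists (e :: l ++ ls) F).
  { intros v Hv. rewrite app_comm_cons in Hv. apply in_app_or in Hv.
    destruct Hv as [Hv|Hv]; [exact (Hd v Hv)|].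
    destruct (Hins v (or_intror Hv)) as [j [-> Hj]]. apply Hk. lia. }
  destruct (walk_to_path adj _ _ _ (walk_app adj _ _ _ _ _ Hw Hws)) as [p [[Hcp Ep] [Hndp Hsub]]].
  destruct (split_at_first (e :: p) (fun v => exists j, M <= j /\ v = R0 j))
    as [[|e' q] [v [l2 [E [[j [Hj ->]] Hfirst]]]]].
  { exists (R0 (Nat.max k M)). split; [rewrite <- Ep; apply last_In|].
    exists (Nat.max k M). split; [lia|reflexivity]. }
  { injection E as E _. exfalso. apply (HM j Hj). rewrite <- E.
    apply in_or_app. right; left; auto. }
  injection E as <- Ep'. rewrite Ep' in Hcp, Hndp, Hsub.
  assert (Hsplit : e :: q ++ R0 j :: l2 = (e :: q ++ [R0 j]) ++ l2)
    by (simpl; rewrite <- app_assoc; reflexivity).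
  rewrite Hsplit in Hcp, Hndp, Hsub.
  destruct (append_disjoint_path F e q (R0 j) Hnd Hc (NoDup_app_remove_r _ _ Hndp)
              (chain_prefix adj _ _ Hcp)) as [Hnd' Hc'].
  { intros w Hw'. apply Hd', Hsub, in_or_app. auto. }
  exists q, j. split; [exact Hnd'|split; [exact Hc'|]].
  apply links_to_tail_R0. intros j' Hj' Hin. apply in_app_or in Hin.
  destruct Hin as [Hin|[Hin|Hin]].
  - apply (HM j'); [lia|]. apply in_or_app. auto.
  - apply (HM j'); [lia|]. rewrite <- Hin. apply in_or_app. right; left; auto.
  - apply (Hfirst (R0 j')); [right; exact Hin|]. exists j'. split; auto. lia.
Qed.

Lemma extend_step F e u : admissible F e ->
  exists q j, admissible (F ++ e :: q) (R0 j) /\ (heavy u -> In u (F ++ e :: q)).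
Proof.
  intros Hadm. destruct (classic (heavy u /\ ~ In u (F ++ [e]))) as [[Hu HuFe]|Hdone].
  - destruct (extend_to_heavy F e u Hadm Hu HuFe) as [q1 Hadm1].
    destruct (extend_to_tail _ _ Hadm1) as [q2 [j Hadm2]].
    rewrite <- app_assoc in Hadm2. exists (q1 ++ u :: q2), j. split; [exact Hadm2|].
    intros _. apply in_or_app. right; right. apply in_or_app. right; left; auto.
  - destruct (extend_to_tail F e Hadm) as [q [j Hadm']]. exists q, j. split; [exact Hadm'|].
    intros Hu. assert (HuFe : In u (F ++ [e])) by (apply NNPP; tauto).
    apply in_app_or in HuFe. apply in_or_app. destruct HuFe as [H|[<-|[]]]; [left; auto|].
    right; left; auto.
Qed.

(* Stage [n] of the construction also swallows the vertex of [U] with code [n], if it is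
   heavy. *)
Lemma ray_through_heavy : countable_set U -> exists R, eps R /\ forall u, heavy u -> in_ray R u.
Proof.
  intros [h Hh].
  set (target := fun n => epsilon (inhabits (R0 0)) (fun u => U u /\ h u = n)).
  assert (Htarget : forall u, heavy u -> target (h u) = u).
  { intros u Hu. pose proof (heavy_U u Hu) as Uu.
    destruct (epsilon_spec (inhabits (R0 0)) (fun v => U v /\ h v = h u)
                (ex_intro _ u (conj Uu eq_refl))) as [Ut Et].
    exact (Hh _ _ Ut Uu Et). }
  destruct (nat_dependent_choice
     (fun s : list V * V => admissible (fst s) (snd s) /\ in_ray R0 (snd s))
     (fun n s s' => (exists q, fst s' = fst s ++ snd s :: q) /\
                    (heavy (target n) -> In (target n) (fst s')))
     ([], R0 0)) as [f Hf].
  { split; [split; [|split]|exists 0; reflexivity]; cbn.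
    - constructor; [intros []|constructor].
    - trivial.
    - apply links_to_tail_R0. intros j _ []. }
  { intros n [F e] [Hadm _]. destruct (extend_step F e (target n) Hadm) as [q [j [H1 H2]]].
    exists (F ++ e :: q, R0 j).
    split; [split; [exact H1|exists j; reflexivity]|split; [exists q; reflexivity|exact H2]]. }
  set (stage := fun n => fst (f n) ++ [snd (f n)]).
  assert (Hne : stage 0 <> []) by (unfold stage; destruct (fst (f 0)); discriminate).
  assert (Hgrow : forall n, exists ext, stage (S n) = stage n ++ ext /\ ext <> []).
  { intros n. destruct (Hf n) as [_ [[q E] _]]. exists (q ++ [snd (f (S n))]). unfold stage.
    rewrite E, <- !app_assoc. split; [reflexivity|destruct q; discriminate]. }
  assert (Hnd : forall n, NoDup (stage n)) by (intros n; apply (Hf n)).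
  assert (Hc : forall n, chain adj (stage n)) by (intros n; apply (Hf n)).
  exists (limit_ray (R0 0) stage). split.
  - apply Heps. split; [exact (limit_ray_is_ray adj _ _ Hne Hgrow Hnd Hc)|].
    apply (limit_ray_equiv adj _ _ Hne Hgrow Hnd). intros n. unfold stage. rewrite last_last.
    apply (Hf n).
  - intros u Hu. apply (in_limit_ray _ _ Hne Hgrow). exists (S (h u)).
    destruct (Hf (h u)) as [_ [_ Hin]]. rewrite Htarget in Hin by exact Hu.
    apply in_or_app. left. exact (Hin Hu).
Qed.

Section Star.
Context (R : nat -> V) (HR : is_ray adj R) (Hheavy : forall u, heavy u -> in_ray R u).

Definition selected (i : I) : Prop :=
  (forall v, comb_interior U (C i) v -> ~ in_ray R v) /\ (forall u, attaches u i -> heavy u).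

(* At most one comb has a given vertex of [R] in its interior, and only countably many
   combs attach at each of the countably many light vertices. *)
Lemma countable_unselected : countable_set U -> countable_set (fun i => ~ selected i).
Proof.
  intros HU.
  apply (countable_set_sub _ (fun i => (exists m, True /\ comb_interior U (C i) (R m)) \/
                                       (exists u, (U u /\ ~ heavy u) /\ attaches u i))).
  - intros i Hi. apply NNPP. intros Hn. apply Hi. split.
    + intros v Hv [m <-]. apply Hn. left. eauto.
    + intros u Hu. apply NNPP. intros Hnu. apply Hn. right. exists u.
      split; [split; [exact (attaches_U u i Hu)|exact Hnu]|exact Hu].
  - apply countable_set_union; apply countable_set_bigcup.
    + exists (fun m => m). auto.
    + intros m _. apply countable_set_subsingleton. intros i j. apply interior_unique.
    + apply (countable_set_sub _ U); [tauto|exact HU].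
    + intros u [_ Hu]. apply NNPP, Hu.
Qed.

Definition star_path (p : list V) : Prop :=
  exists i n, selected i /\ p = rev (teeth (C i) n).

Lemma spines_disjoint i j v : i <> j -> in_ray (spine (C i)) v -> ~ in_ray (spine (C j)) v.
Proof.
  intros Hij [k <-] [k' E]. apply Hij, (interior_unique i j (spine (C i) k)).
  - apply spine_interior.
  - rewrite <- E. apply spine_interior.
Qed.

Lemma selected_spine_off_R i v : selected i -> in_ray R v -> ~ in_ray (spine (C i)) v.
Proof. intros [Hi _] HRv [k <-]. exact (Hi _ (spine_interior i k) HRv). Qed.

Lemma star_path_shape p : star_path p -> is_path adj p /\
  exists x m y (a : {i | selected i}), p = x :: m ++ [y] /\ in_ray R x /\
    in_ray (spine (C (proj1_sig a))) y /\
    forall v, In v m ->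
      ~ (in_ray R v \/ exists b : {i | selected i}, in_ray (spine (C (proj1_sig b))) v).
Proof.
  intros [i [n [Si ->]]]. destruct (tooth_decompose i n) as [x [m [y [E [Hx [_ Hm]]]]]].
  destruct (HC i) as [_ [_ [_ [Hteeth _]]]]. destruct (Hteeth n) as [[_ [Hnd Hc]] _].
  split.
  - split; [rewrite E, rev_cons_snoc; discriminate|].
    split; [apply NoDup_rev, Hnd|apply (chain_rev adj Hsym), Hc].
  - exists y, (rev m), x, (exist _ i Si). rewrite E, rev_cons_snoc.
    split; [reflexivity|]. split; [|split; [exact Hx|]].
    + apply Hheavy, (proj2 Si). exists n, (x :: m). rewrite E. reflexivity.
    + intros v Hv. rewrite <- in_rev in Hv. destruct (Hm v Hv) as [Hint Hoff].
      intros [HvR|[[j Sj] Hvj]]; [exact (proj1 Si v Hint HvR)|]. simpl in Hvj.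
      destruct (classic (i = j)) as [<-|Hij]; [exact (Hoff Hvj)|].
      destruct Hvj as [k <-]. exact (Hij (interior_unique _ _ _ Hint (spine_interior j k))).
Qed.

Lemma star_paths_independent p q : star_path p -> star_path q -> p <> q ->
  forall v, inner_vertex p v -> ~ In v q.
Proof.
  intros [i [n [Si ->]]] [j [n' [Sj ->]]] Hpq v [x' [m' [y' [Ep Hv]]]] Hvq.
  destruct (tooth_decompose i n) as [x [m [y [E [_ [_ Hm]]]]]].
  rewrite E, rev_cons_snoc in Ep.
  apply (app_inj_tail (y :: rev m) (x' :: m')) in Ep. destruct Ep as [Ep _].
  injection Ep as _ Em. rewrite <- Em, <- in_rev in Hv.
  destruct (Hm v Hv) as [Hint _]. rewrite <- in_rev in Hvq.
  assert (i = j) as <-.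
  { apply (interior_unique i j v Hint). split; [right; exists n'; exact Hvq|apply Hint]. }
  destruct (classic (n = n')) as [<-|Hnn]; [exact (Hpq eq_refl)|].
  destruct (HC i) as [_ [_ [_ [_ Hd]]]]. apply (Hd n n' Hnn v); [|exact Hvq].
  rewrite E. right. apply in_or_app. auto.
Qed.

Lemma star_leaf_fan i : selected i -> exists f : nat -> list V,
  (forall n, star_path (f n)) /\
  (forall n, exists t y, f n = t ++ [y] /\ in_ray (spine (C i)) y) /\
  (forall n m, n <> m -> disjoint_lists (f n) (f m)).
Proof.
  intros Si. exists (fun n => rev (teeth (C i) n)). split; [|split].
  - intros n. exists i, n. auto.
  - intros n. destruct (tooth_decompose i n) as [x [m [y [E [Hx _]]]]].
    exists (y :: rev m), x. rewrite E, rev_cons_snoc. auto.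
  - intros n m Hnm v Hv Hv'. rewrite <- in_rev in Hv, Hv'.
    destruct (HC i) as [_ [_ [_ [_ Hd]]]]. exact (Hd n m Hnm v Hv Hv').
Qed.

Lemma star_of_selected :
  is_star_of_rays adj {i | selected i} R (fun a => spine (C (proj1_sig a))) star_path.
Proof.
  split; [exact HR|]. split; [intros a; exact (proj1 (HC _))|].
  split; [intros [i Si] v; exact (selected_spine_off_R i v Si)|].
  split.
  { intros [i Si] [j Sj] Hab v. apply spines_disjoint. simpl. intros <-.
    apply Hab, eq_sig_hprop; [intros; apply proof_irrelevance|reflexivity]. }
  split; [exact star_path_shape|]. split; [exact star_paths_independent|].
  intros [i Si]. exact (star_leaf_fan i Si).
Qed.

End Star.
End Combs.

Theorem lemma2p1 (V : Type) (adj : V -> V -> Prop)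
  (Hsym : forall x y, adj x y -> adj y x) (Hirr : forall x, ~ adj x x)
  (eps : (nat -> V) -> Prop) (Heps : is_end adj eps)
  (U : V -> Prop) (HU : countable_set U)
  (I : Type) (C : I -> comb)
  (HC : forall i, is_comb adj eps U (C i))
  (Hdisj : forall i j, i <> j -> internally_disjoint U (C i) (C j))
  (Hunc : ~ exists f : I -> nat, forall i j, f i = f j -> i = j) :
  exists (S : I -> Prop) (R : nat -> V) (P : list V -> Prop),
    (exists f : {i : I | S i} -> I,
        (forall a b, f a = f b -> a = b) /\ (forall i, exists a, f a = i)) /\
    eps R /\ (forall i, S i -> eps (spine (C i))) /\
    is_star_of_rays adj {i : I | S i} R (fun a => spine (C (proj1_sig a))) P.
Proof.
  destruct Heps as [R0 [HR0 HepsR]].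
  destruct (ray_through_heavy adj Hsym eps R0 HR0 HepsR U I C HC Hdisj HU) as [R [HR Hheavy]].
  pose proof (countable_unselected adj eps U I C HC Hdisj R HU) as Hcount.
  destruct (uncountable_set_injective_seq _ (uncountable_set_of_countable_complement _ Hunc Hcount))
    as [e [He HeS]].
  exists (selected U I C R), R, (star_path U I C R). split; [|split; [exact HR|split]].
  - exact (sig_bijection_of_countable_complement _ e He HeS Hcount).
  - intros i _. apply HC.
  - exact (star_of_selected adj Hsym eps U I C HC Hdisj R (proj1 (proj1 (HepsR R) HR)) Hheavy).
Qed.
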